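(* Let $X$ be a binary $N\times t$ matrix that is 3-good, let $S\subseteq[t]$ with $|S|=3$, $\mathbf{y}=r(X,S)$, $H=H(X,3,\mathbf{y})=([t],E)$, $L_1=\log_2\log_2 t$, $L_2=3L_1$. Let $G'=([t],E')$ be the graph in which distinct vertices $v_1,v_2$ are adjacent iff at least $L_2$ hyperedges of $E$ contain both, and let $E_1\subseteq E$ be the set of hyperedges containing some edge of $G'$ as a subset. For each $e\in E_1$ choose (arbitrarily) an additional vertex $v\in e$ such that $e\setminus\{v\}\in E'$. Let $G''=([t],E'')$ be the directed graph (without multiple arcs) containing, for every $e=\{v_1,v_2,v_3\}\in E_1$ with chosen additional vertex $v_1$, the arcs $(v_1,v_2),(v_1,v_3),(v_2,v_3),(v_3,v_2)$, and no other arcs. Then every vertex of $G''$ has out-degree less than $3L_1^2$.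
   Context: For a binary $N\times t$ matrix $X$ with columns $x(1),\dots,x(t)$ and $S\subseteq[t]$, $r(X,S)=\bigvee_{j\in S}x(j)$ (coordinatewise Boolean OR). For $\mathbf{y}\in\{0,1\}^N$, $H(X,3,\mathbf{y})$ is the $3$-uniform hypergraph on $[t]$ whose hyperedges are all $3$-element $S\subseteq[t]$ with $r(X,S)=\mathbf{y}$. A $(3,k)$ configuration of size $L$ is a set of $L$ hyperedges $e_1,\dots,e_L$ with a set $U$, $|U|=k$, such that $e_i\cap e_j=U$ for all $i\ne j$. Fix $p\in(0,1)$; $\Pr_1(s,w)$ is the probability that the OR of $s$ independent uniformly random length-$N$ binary columns of weight $\lfloor pN\rfloor$ equals a fixed vector of weight $w$; $\Pr_2(s,w_1,w)$ is the probability that the OR of $s$ such columns together with a fixed column $\mathbf{y}_1$ of weight $w_1$ equals a fixed vector $\mathbf{y}$ of weight $w$ with $\mathbf{y}\vee\mathbf{y}_1=\mathbf{y}$. With $L_1=\log_2\log_2 t$, $X$ is 3-good if: (1) for every $\mathbf{y}$, $H(X,3,\mathbf{y})$ has no $(3,1)$ configuration of size $L_1$; (2) for every $\mathbf{y}$ with $|\mathbf{y}|=w$, $H(X,3,\mathbf{y})$ has no $(3,0)$ configuration of size $10\max(t^3\Pr_1(3,w),N)$; (3) for all $\mathbf{y},\mathbf{y}_1$ with $\mathbf{y}\vee\mathbf{y}_1=\mathbf{y}$, $|\mathbf{y}_1|=w_1$, $|\mathbf{y}|=w$, the number of $j$ with $\mathbf{y}_1\vee x(j)=\mathbf{y}$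 is less than $10B(N,t)$, where $B(N,t)=t\Pr_2(1,w_1,w)$ if this exceeds $N$, $B(N,t)=N$ if $t^{-1/\sqrt{L_1}}\le t\Pr_2(1,w_1,w)\le N$, and $B(N,t)=L_1/10$ if $t\Pr_2(1,w_1,w)<t^{-1/\sqrt{L_1}}$; (4) for every $\mathbf{y}$ with $|\mathbf{y}|=w$ and integer $w_1\le w$, the number of pairwise disjoint pairs $\{j_1,j_2\}\subseteq[t]$ with $x(j_1)\vee x(j_2)\vee\mathbf{y}=\mathbf{y}$ and $|x(j_1)\vee x(j_2)|=w_1$ is less than $10\max(N,\binom{w}{w_1}t^2\Pr_1(2,w_1))$. *)

From mathcomp Require Import all_boot all_order all_algebra.
From mathcomp Require Import boolp reals exp.
Set Implicit Arguments. Unset Strict Implicit. Unset Printing Implicit Defensive.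
Import Order.TTheory GRing.Theory Num.Theory.
Local Open Scope ring_scope.

Section Defs.
Variables (R : realType) (N t : nat).
Implicit Types (X : 'M[bool]_(N, t)) (y : {ffun 'I_N -> bool}).

Definition wt y : nat := #|[set i | y i]|.

Definition vor (a b : {ffun 'I_N -> bool}) : {ffun 'I_N -> bool} :=
  [ffun i => a i || b i].

Definition xcol X (j : 'I_t) : {ffun 'I_N -> bool} := [ffun i => X i j].

Definition rX X (S : {set 'I_t}) : {ffun 'I_N -> bool} :=
  [ffun i => [exists j in S, X i j]].

Definition H3 X y : {set {set 'I_t}} :=
  [set S : {set 'I_t} | (#|S| == 3)%N && (rX X S == y)].

Definition config (E : {set {set 'I_t}}) (k : nat) (F : {set {set 'I_t}}) :=
  F \subset E /\
  exists U : {set 'I_t}, #|U| = k /\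
    forall e1 e2, e1 \in F -> e2 \in F -> e1 != e2 -> e1 :&: e2 = U.

Definition log2 (x : R) : R := ln x / ln 2.
Definition L1 : R := log2 (log2 t%:R).

Definition kw (p : R) : nat := Num.truncn (p * N%:R).

(* canonical fixed vector of weight w (for w <= N) *)
Definition yw (w : nat) : {ffun 'I_N -> bool} := [ffun i : 'I_N => (i < w)%N].

Definition orfam s (f : {ffun 'I_s -> {ffun 'I_N -> bool}}) : {ffun 'I_N -> bool} :=
  [ffun i => [exists j, f j i]].

(* Pr_1(s,w): probability that the OR of s independent uniformly random
   columns of weight floor(pN) equals a fixed vector of weight w. *)
Definition Pr1 (p : R) (s w : nat) : R :=
  #|[set f : {ffun 'I_s -> {ffun 'I_N -> bool}} |
      [forall j, wt (f j) == kw p] && (orfam f == yw w)]|%:R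
  / ('C(N, kw p) ^ s)%:R.

(* Pr_2(s,w1,w): probability that the OR of s such random columns together
   with a fixed column y1 of weight w1 equals a fixed y of weight w,
   y1 <= y (taken y1 = yw w1, y = yw w). *)
Definition Pr2 (p : R) (s w1 w : nat) : R :=
  #|[set f : {ffun 'I_s -> {ffun 'I_N -> bool}} |
      [forall j, wt (f j) == kw p] && (vor (orfam f) (yw w1) == yw w)]|%:R
  / ('C(N, kw p) ^ s)%:R.

Definition Bnt (p : R) (w1 w : nat) : R :=
  let q := t%:R * Pr2 p 1 w1 w in
  if N%:R < q then q
  else if powR t%:R (- (Num.sqrt L1)^-1) <= q then N%:R
  else L1 / 10.

Definition good3 (p : R) X : Prop :=
  (forall y F, config (H3 X y) 1 F -> #|F|%:R < L1) /\
  (forall y F, config (H3 X y) 0 F ->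
     #|F|%:R < 10 * Num.max (t%:R ^+ 3 * Pr1 p 3 (wt y)) N%:R) /\
  (forall y y1, vor y y1 = y ->
     #|[set j : 'I_t | vor y1 (xcol X j) == y]|%:R < 10 * Bnt p (wt y1) (wt y)) /\
  (forall y (w1 : nat) (P : {set {set 'I_t}}), (w1 <= wt y)%N ->
     (forall q, q \in P -> exists j1 j2 : 'I_t, j1 != j2 /\ q = [set j1; j2] /\
        vor (vor (xcol X j1) (xcol X j2)) y = y /\
        wt (vor (xcol X j1) (xcol X j2)) = w1) ->
     (forall q1 q2, q1 \in P -> q2 \in P -> q1 != q2 -> [disjoint q1 & q2]) ->
     #|P|%:R < 10 * Num.max N%:R ('C(wt y, w1)%:R * t%:R ^+ 2 * Pr1 p 2 w1)).

Definition codeg (E : {set {set 'I_t}}) (v1 v2 : 'I_t) : nat :=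
  #|[set e in E | (v1 \in e) && (v2 \in e)]|.

Definition Gp_edge (E : {set {set 'I_t}}) (f : {set 'I_t}) : Prop :=
  exists v1 v2, v1 != v2 /\ f = [set v1; v2] /\ 3 * L1 <= (codeg E v1 v2)%:R.

Definition inE1 (E : {set {set 'I_t}}) (e : {set 'I_t}) : Prop :=
  e \in E /\ exists f : {set 'I_t}, f \subset e /\ Gp_edge E f.

Definition arc (E : {set {set 'I_t}}) (c : {set 'I_t} -> 'I_t) (v u : 'I_t) : Prop :=
  exists e, inE1 E e /\
    ((v = c e /\ u \in e /\ u != c e) \/
     (v \in e /\ u \in e /\ v != c e /\ u != c e /\ v != u)).

Definition outdeg (E : {set {set 'I_t}}) (c : {set 'I_t} -> 'I_t) (v : 'I_t) : nat :=
  #|[set u | `[< arc E c v u >] ]|.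

End Defs.

From Pilot Require Import Defs.
From mathcomp Require Import all_boot all_order all_algebra.
From mathcomp Require Import boolp reals exp.
From mathcomp Require Import lra.
Import Order.TTheory GRing.Theory Num.Theory.
Local Open Scope ring_scope.
Set Implicit Arguments. Unset Strict Implicit.

(* Condition (1) bounds every sunflower with a one-point kernel by L1.  Hence a
   vertex v has fewer than L1 neighbours in G': otherwise a maximal sunflower
   at v among the hyperedges meeting a set of neighbours of v exactly once
   could be extended, since v and a neighbour it misses lie in at least 3 L1
   common hyperedges, more than can hit the petals.  Every out-neighbour of v
   in G'' is a G'-neighbour of v or of one of the fewer than 2 L1 petal
   vertices of a maximal sunflower at v among the hyperedges whose two other
   vertices are G'-adjacent; this gives fewer than L1 + 2 L1 * L1 <= 3 L1^2
   out-neighbours (and none at all when L1 <= 1). *)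

Lemma card_bigcup_le (I T : finType) (A : {set I}) (f : I -> {set T}) :
  (#|\bigcup_(i in A) f i| <= \sum_(i in A) #|f i|)%N.
Proof.
elim/big_rec2: _ => [|i n U _ IH]; first by rewrite cards0.
by rewrite (leq_trans (leq_card_setU _ _)) // leq_add2l.
Qed.

Section Sunflower.
Variables (T : finType) (E : {set {set T}}).
Implicit Types (e f U : {set T}) (F : {set {set T}}).
Hypothesis E3 : {in E, forall e, #|e| = 3%N}.

Definition sunflower U F : bool :=
  [forall e1 in F, forall e2 in F, (e1 != e2) ==> (e1 :&: e2 == U)].

Definition petals (v : T) F : {set T} :=
  \bigcup_(f in F) (f :\ v).

Lemma sunflowerP U F :
  reflect (forall e1 e2, e1 \in F -> e2 \in F -> e1 != e2 -> e1 :&: e2 = U)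
          (sunflower U F).
Proof.
apply: (iffP forall_inP) => [sF e1 e2 e1F e2F ne|sF e1 e1F].
  by have /forall_inP/(_ e2 e2F)/implyP/(_ ne)/eqP := sF e1 e1F.
by apply/forall_inP => e2 e2F; apply/implyP => ne; rewrite sF.
Qed.

Lemma sunflowerU1 U F e :
  sunflower U F -> {in F, forall f, e :&: f = U} -> sunflower U (e |: F).
Proof.
move=> /sunflowerP sF eF; apply/sunflowerP => e1 e2.
case/setU1P=> [->|e1F] /setU1P[->|e2F] ne; first by rewrite eqxx in ne.
- exact: eF.
- by rewrite setIC eF.
- exact: sF.
Qed.

Lemma card_edgeD1 e v : e \in E -> v \in e -> #|e :\ v| = 2%N.
Proof.
by move=> eE ve; have /eqP := E3 eE; rewrite (cardsD1 v) ve add1n eqSS => /eqP.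
Qed.

Lemma card_petals v F :
  F \subset E -> {in F, forall f, v \in f} -> (#|petals v F| <= 2 * #|F|)%N.
Proof.
move=> FE vF; apply: leq_trans (card_bigcup_le _ _) _.
rewrite (eq_bigr (fun _ => 2%N)) ?sum_nat_const 1?mulnC // => f fF.
exact: card_edgeD1 (subsetP FE f fF) (vF f fF).
Qed.

Lemma maximal_sunflower v (Q : pred {set T}) :
  exists F, [/\ F \subset E, {in F, forall f, (v \in f) && Q f},
    sunflower [set v] F &
    {in E, forall e, v \in e -> Q e -> ~~ [disjoint e :\ v & petals v F]}].
Proof.
pose P F :=
  [&& F \subset E, [forall f in F, (v \in f) && Q f] & sunflower [set v] F].
have P0 : P set0.
  rewrite /P sub0set /=; apply/andP; split.
    by apply/forall_inP => e; rewrite inE.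
  by apply/sunflowerP => e1 e2; rewrite inE.
have [F /and3P[FE /forall_inP FQ sunF] Fmax] := arg_maxnP (fun F => #|F|) P0.
exists F; split=> // e eE ve Qe; apply/negP => dis.
have petal_out z : z \in e :\ v -> z \in petals v F -> False.
  by move=> ze zP; rewrite (disjointFr dis ze) in zP.
have eNF : e \notin F.
  apply/negP => eF.
  have /card_gt0P[z ze] : (0 < #|e :\ v|)%N by rewrite card_edgeD1.
  by apply: (petal_out z ze); apply/bigcupP; exists e.
have meet f : f \in F -> e :&: f = [set v].
  move=> fF; have /andP[vf _] := FQ f fF.
  apply/setP => z; rewrite !inE.
  have [->|zv] := eqVneq z v; first by rewrite ve vf.
  apply/negP => /andP[ze zf]; apply: (petal_out z); first by rewrite !inE zv ze.
  by apply/bigcupP; exists f; rewrite // !inE zv zf.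
have : P (e |: F).
  rewrite /P subUset sub1set eE FE sunflowerU1 //=; apply/andP; split=> //.
  by apply/forall_inP => f /setU1P[->|/FQ //]; rewrite ve Qe.
by move/Fmax; rewrite cardsU1 eNF add1n /= ltnn.
Qed.

Lemma exists_edge_avoiding a b (B : {set T}) :
  a != b -> a \notin B -> b \notin B ->
  (#|B| < #|[set e in E | (a \in e) && (b \in e)]|)%N ->
  exists2 e, e \in E & [&& a \in e, b \in e & [disjoint e & B]].
Proof.
move=> ab aB bB ltB.
have meeting : [set e in E | [&& a \in e, b \in e & ~~ [disjoint e & B]]]
               \subset [set [set a; b; w] | w in B].
  apply/subsetP => e; rewrite inE => /and4P[eE ae be].
  rewrite -setI_eq0 => /set0Pn[w /setIP[we wB]].
  apply/imsetP; exists w => //; apply/eqP; rewrite eq_sym eqEcard (E3 eE).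
  rewrite !subUset !sub1set ae be we setUC cardsU1 cards2 ab !inE negb_or.
  by rewrite (memPn aB w wB) (memPn bB w wB).
have /subsetPn[e] : ~~ ([set e in E | (a \in e) && (b \in e)] \subset
    [set e in E | [&& a \in e, b \in e & ~~ [disjoint e & B]]]).
  apply/negP => /subset_leq_card/leq_trans/(_ (subset_leq_card meeting)).
  by move/leq_trans/(_ (leq_imset_card _ _)); rewrite leqNgt ltB.
rewrite !inE => /and3P[eE ae be]; rewrite eE ae be /= negbK => dis.
by exists e; rewrite // ae be.
Qed.

End Sunflower.

Lemma natrM_2S_lt_3sqr (R : realFieldType) (d m : nat) (L : R) :
  d%:R < L -> m%:R < L -> (d * (2 * m).+1)%:R < 3 * L ^+ 2.
Proof.
move=> dL mL; have m0 : 0 <= m%:R :> R := ler0n _ _.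
have L0 : 0 < L := le_lt_trans m0 mL.
rewrite natrM -addn1 natrD natrM expr2.
case: d dL => [|d] dL; first by rewrite mul0r mulr_gt0 // mulr_gt0.
have d1 : 1 <= d.+1%:R :> R by rewrite ler1n.
nra.
Qed.

Lemma codegC (t : nat) (E : {set {set 'I_t}}) a b : codeg E a b = codeg E b a.
Proof. by apply: eq_card => e; rewrite !inE (andbC (a \in e)). Qed.

Section Codegree.
Variables (R : realType) (t : nat) (E : {set {set 'I_t}}) (L : R).
Implicit Types (e f D : {set 'I_t}) (F : {set {set 'I_t}}).
Hypothesis E3 : {in E, forall e, #|e| = 3%N}.
Hypothesis sunflower_lt : forall F, config E 1 F -> #|F|%:R < L.

Lemma card_sunflower_lt v F :
  F \subset E -> sunflower [set v] F -> #|F|%:R < L.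
Proof.
move=> FE /sunflowerP sF; apply: sunflower_lt; split=> //.
by exists [set v]; split; [exact: cards1 | exact: sF].
Qed.

Lemma sunflower_bound_gt0 (v : 'I_t) : 0 < L.
Proof.
have := @card_sunflower_lt v _ (sub0set E); rewrite cards0; apply.
by apply/sunflowerP => e1 e2; rewrite inE.
Qed.

Definition nbhd v := [set u | (v != u) && (3 * L <= (codeg E v u)%:R)].

Lemma nbhdC u v : (u \in nbhd v) = (v \in nbhd u).
Proof. by rewrite !inE eq_sym codegC. Qed.

(* With [F] a maximal sunflower at [v] of hyperedges meeting [D] once and [x]
   in [D] missed by [F], the petal vertices and [D :\ x] are fewer than
   [3 L <= codeg v x], so some hyperedge through [v] and [x] avoids them all
   and extends [F]. *)
Lemma nbhd_card_step v D :
  D \subset nbhd v -> (#|D|.-1)%:R < L -> #|D|%:R < L.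
Proof.
move=> Dv ltD; rewrite ltNge; apply/negP => geD.
have [F [FE FQ sunF maxF]] :=
  maximal_sunflower E3 v (fun e => #|e :&: D| == 1%N).
have ltF := card_sunflower_lt FE sunF.
have vF : {in F, forall f, v \in f} by move=> f /FQ/andP[].
have [x xD xF] : exists2 x, x \in D & {in F, forall f, x \notin f}.
  have /subsetPn[x xD xNU] : ~~ (D \subset \bigcup_(f in F) (f :&: D)).
    apply/negP => /subset_leq_card/leq_trans/(_ (card_bigcup_le _ _)).
    rewrite (eq_bigr (fun _ => 1%N)) => [|f /FQ/andP[_ /eqP] //].
    rewrite sum1_card leqNgt -(ltr_nat R); apply/negP/negPn.
    exact: lt_le_trans ltF geD.
  exists x => // f fF; apply/negP => xf; apply: (negP xNU).
  by apply/bigcupP; exists f; rewrite // inE xf.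
have := subsetP Dv x xD; rewrite inE => /andP[vx codx].
pose B := petals v F :|: D :\ x.
have vD : v \notin D by apply: contraNN (subsetP Dv v) _; rewrite inE eqxx.
have vB : v \notin B.
  rewrite in_setU in_setD1 (negbTE vD) andbF orbF.
  by apply/bigcupP => -[f _]; rewrite in_setD1 eqxx.
have xB : x \notin B.
  rewrite in_setU in_setD1 eqxx orbF; apply/bigcupP => -[f fF].
  by rewrite in_setD1 (negbTE (xF f fF)) andbF.
have ltB : (#|B| < codeg E v x)%N.
  have cardB : (#|B| <= 2 * #|F| + #|D|.-1)%N.
    apply: leq_trans (leq_card_setU _ _) _; apply: leq_add.
      by apply: (card_petals E3).
    by rewrite (cardsD1 x D) xD.
  rewrite -(ltr_nat R); apply: le_lt_trans (_ : (2 * #|F| + #|D|.-1)%:R < _).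
    by rewrite ler_nat.
  by apply: lt_le_trans codx; rewrite natrD natrM; lra.
have [e eE /and3P[ve xe disB]] := exists_edge_avoiding E3 vx vB xB ltB.
have Qe : #|e :&: D| == 1%N.
  apply/cards1P; exists x; apply/setP => z; rewrite !inE.
  have [->|zx] := eqVneq z x; first by rewrite xe xD.
  apply/negP => /andP[ze zD].
  have zB : z \in B by rewrite in_setU in_setD1 zx zD orbT.
  by rewrite (disjointFr disB ze) in zB.
apply: (negP (maxF e eE ve Qe)).
exact: disjointWl (subD1set e v) (disjointWr (subsetUl _ _) disB).
Qed.

Lemma card_nbhd_lt v : #|nbhd v|%:R < L.
Proof.
suff small n D : #|D| = n -> D \subset nbhd v -> #|D|%:R < L.
  exact: small _ _ erefl (subxx _).
elim: n D => [|n IH] D cardD Dv; first by rewrite cardD (sunflower_bound_gt0 v).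
apply: nbhd_card_step (Dv) _; rewrite cardD /=.
have /card_gt0P[x xD] : (0 < #|D|)%N by rewrite cardD.
have cardDx : #|D :\ x| = n by apply/eqP; rewrite -eqSS -cardD (cardsD1 x D) xD.
by rewrite -cardDx; apply: IH cardDx (subset_trans (subD1set D x) Dv).
Qed.

Definition adjacent_pair f : bool :=
  [exists a, exists b, (f == [set a; b]) && (b \in nbhd a)].

Lemma adjacent_pair_nbhd f x y :
  adjacent_pair f -> x \in f -> y \in f -> x != y -> y \in nbhd x.
Proof.
case/existsP=> a /existsP[b /andP[/eqP-> ab]].
by move=> /set2P[]-> /set2P[]->; rewrite ?eqxx // => _; rewrite nbhdC.
Qed.

Lemma petals_sub_nbhd v F :
  {in F, forall f, adjacent_pair (f :\ v)} ->
  petals v F \subset \bigcup_(w in petals v F) nbhd w.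
Proof.
move=> adjF; apply/subsetP => u /bigcupP[f fF uf].
have adj := adjF f fF.
have [w wf wu] : exists2 w, w \in f :\ v & w != u.
  case/existsP: (adj) => a /existsP[b /andP[/eqP fab]].
  rewrite inE => /andP[ab _]; rewrite fab.
  have [-> | ua] := eqVneq u a.
    by exists b; rewrite ?inE ?eqxx ?orbT // eq_sym.
  by exists a; rewrite ?inE ?eqxx // eq_sym.
apply/bigcupP; exists w; first by apply/bigcupP; exists f.
exact: adjacent_pair_nbhd adj wf uf wu.
Qed.

Variable c : {set 'I_t} -> 'I_t.
Hypothesis c_spec :
  forall e, inE1 R E e -> c e \in e /\ adjacent_pair (e :\ c e).

Lemma out_nbrs_sub v : exists m (W : {set 'I_t}),
  [/\ m%:R < L, (#|W| <= 2 * m)%N &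
      [set u | `[< Defs.arc R E c v u >]]
        \subset \bigcup_(w in W) nbhd w :|: nbhd v].
Proof.
have [F [FE FQ sunF maxF]] :=
  maximal_sunflower E3 v (fun e => adjacent_pair (e :\ v)).
have vF : {in F, forall f, v \in f} by move=> f /FQ/andP[].
have adjF : {in F, forall f, adjacent_pair (f :\ v)} by move=> f /FQ/andP[].
exists #|F|, (petals v F); split.
- exact: card_sunflower_lt FE sunF.
- by apply: (card_petals E3).
apply/subsetP => u; rewrite inE => /asboolP[e [eE1 arc_e]].
have [ce adj] := c_spec eE1.
case: arc_e => [[vce [ue uc]] | [ve [ue [vc [uc vu]]]]]; last first.
  have vec : v \in e :\ c e by rewrite in_setD1 vc ve.
  have uec : u \in e :\ c e by rewrite in_setD1 uc ue.
  by apply/setUP; right; apply: adjacent_pair_nbhd adj vec uec vu.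
apply/setUP; left; rewrite -vce in adj uc.
have ve : v \in e by rewrite vce.
have /set0Pn[z /setIP[ze zP]] : (e :\ v) :&: petals v F != set0.
  by rewrite setI_eq0; apply: maxF (eE1.1) ve adj.
have [<- | zu] := eqVneq z u; first exact: subsetP (petals_sub_nbhd adjF) _ zP.
apply/bigcupP; exists z => //.
by apply: adjacent_pair_nbhd adj ze _ zu; rewrite in_setD1 uc ue.
Qed.

Lemma outdeg_lt v : (outdeg R E c v)%:R < 3 * L ^+ 2.
Proof.
have [m [W [ltm cardW sub]]] := out_nbrs_sub v.
case: (@arg_maxnP _ v xpredT (fun w => #|nbhd w|) isT) => w0 _ w0max.
have cnt : (outdeg R E c v <= #|nbhd w0| * (2 * m).+1)%N.
  apply: leq_trans (subset_leq_card sub) _.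
  apply: leq_trans (leq_card_setU _ _) _.
  rewrite mulnS addnC; apply: leq_add; first exact: w0max.
  apply: leq_trans (card_bigcup_le _ _) _.
  apply: (@leq_trans (\sum_(w in W) #|nbhd w0|)).
    by apply: leq_sum => w _; apply: w0max.
  by rewrite sum_nat_const mulnC leq_mul2l cardW orbT.
rewrite -(ler_nat R) in cnt; apply: le_lt_trans cnt _.
exact: natrM_2S_lt_3sqr (card_nbhd_lt w0) ltm.
Qed.

End Codegree.

Lemma Gp_edge_adjacent_pair (R : realType) (t : nat) (E : {set {set 'I_t}}) f :
  Gp_edge R E f -> adjacent_pair E (L1 R t) f.
Proof.
case=> a [b [ab [-> cod]]]; apply/existsP; exists a; apply/existsP; exists b.
by rewrite eqxx inE ab.
Qed.

Unset Implicit Arguments.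

Theorem lemma5 (R : realType) (N t : nat) (p : R) (X : 'M[bool]_(N, t))
  (S : {set 'I_t}) (c : {set 'I_t} -> 'I_t) :
  0 < p < 1 ->
  good3 p X ->
  #|S| = 3%N ->
  (forall e, inE1 R (H3 X (rX X S)) e ->
     c e \in e /\ Gp_edge R (H3 X (rX X S)) (e :\ c e)) ->
  forall v : 'I_t, (outdeg R (H3 X (rX X S)) c v)%:R < 3 * (L1 R t) ^+ 2.
Proof.
move=> _ [sunflower1 _] _ c_spec v.
set E := H3 X (rX X S) in c_spec *.
have E3 : {in E, forall e : {set 'I_t}, #|e| = 3%N}.
  by move=> e; rewrite inE => /andP[/eqP].
apply: (outdeg_lt E3 (sunflower1 (rX X S))) => e /c_spec[ce adj].
by split; last exact: Gp_edge_adjacent_pair.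
Qed.
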